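(* Let $U_2$ be a unitary matrix with real entries having a unique (up to scalars) eigenvector $|\phi_0\rangle$ of eigenvalue $1$, chosen with real entries and norm $1$; let $|\mu\rangle$ be a unit vector with real entries, $U_1=I-2|\mu\rangle\langle\mu|$, $U=U_2U_1$, $|\tilde\phi_0\rangle=|\phi_0\rangle-\langle\mu|\phi_0\rangle|\mu\rangle$, and $\varepsilon\in(0,1)$. Assume that all eigenvalues $e^{i\alpha}$ of $U$ satisfy $|\alpha|\le\pi/2$. Then for every $T\ge\mathsf{QHT}_\varepsilon(U_2,|\mu\rangle)$, the procedure $\mathbf{Rotate}(U,1/T,\varepsilon)$ maps $|\tilde\phi_0\rangle$ to a state at Euclidean distance $O(\sqrt{\varepsilon})$ from the $U$-rotation of $|\tilde\phi_0\rangle$. Moreover, the number of applications of $\text{c-}U$ is $O(\log(1/\varepsilon)\cdot T)$.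
   Context: Decompose $|\tilde\phi_0\rangle=\delta_0|w_0\rangle+\sum_{1\le j\le J}\delta_j(|w_j^+\rangle+|w_j^-\rangle)+\delta_{-1}|w_{-1}\rangle$ with real coefficients, where $|w_0\rangle$ (resp. $|w_{-1}\rangle$) is a unit eigenvector of $U$ of eigenvalue $1$ (resp. $-1$) and $|w_j^\pm\rangle$ are unit eigenvectors of eigenvalues $e^{\pm i\alpha_j}$, $0<\alpha_j<\pi$, $|w_j^-\rangle=\overline{|w_j^+\rangle}$. The $U$-rotation of $|\tilde\phi_0\rangle$ is $\delta_0|w_0\rangle+\sum_j\delta_j(|w_j^+\rangle-|w_j^-\rangle)+\delta_{-1}|w_{-1}\rangle$. $\mathit{QH}$ takes value $1/\alpha_j$ with probability $2\delta_j^2$, $1/\pi$ with probability $\delta_{-1}^2$, and $0$ otherwise; $\mathsf{QHT}_\varepsilon(U_2,|\mu\rangle)=\min\{y:\Pr[\mathit{QH}>y]\le\varepsilon\}$. $\mathbf{Estimate}$ is the standard phase estimation circuit for $U$ with precision $\Delta$ (on an eigenvector with eigenphase $\alpha\in(-\pi,\pi]$ it outputs $\alpha$ within $\Delta$ with error probability at most $1/3$, outputs $0$ with certainty on $1$-eigenvectors, and uses $O(1/\Delta)$ calls to $\text{c-}U$ and its inverse). $\mathbf{Rotate}(U,\Delta,\varepsilon)$ on input $|\psi\rangle$: (1) apply $\Theta(\log(1/\varepsilon))$ times $\mathbf{Estimate}$ for $U$ with precision $\Delta$ to the same state $|\psi\rangle$ (fresh registers each time); (2) if the majority of estimated phases are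 negative, multiply the state by $-1$ (phase flip), otherwise do nothing; (3) undo the phase estimations of step (1). *)

From HB Require Import structures.
From mathcomp Require Import all_boot all_order all_algebra.
From mathcomp Require Import all_classical all_reals all_analysis.
From mathcomp Require Import complex.
Set Implicit Arguments. Unset Strict Implicit. Unset Printing Implicit Defensive.
Import Order.TTheory GRing.Theory Num.Theory.
Local Open Scope ring_scope.

Section QRotate.
Variable R : realType.
Local Notation C := (R[i]).

Definition rc (x : R) : C := Complex x 0.
Definition cmx m n (A : 'M[R]_(m, n)) : 'M[C]_(m, n) := map_mx rc A.

Definition adjmx m n (A : 'M[C]_(m, n)) : 'M[C]_(n, m) := (map_mx (@conjc R) A)^T.

Definition sqmod (z : C) : R := complex.Re z ^+ 2 + complex.Im z ^+ 2.
Definition vnorm2 n (v : 'cV[C]_n) : R := \sum_(i < n) sqmod (v i 0).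

Definition expi (a : R) : C := Complex (cos a) (sin a).

Definition householder n (mu : 'cV[R]_n) : 'M[R]_n := 1%:M - 2 *: (mu *m mu^T).

Definition phi_tilde n (phi0 mu : 'cV[R]_n) : 'cV[R]_n :=
  phi0 - (mu^T *m phi0) 0 0 *: mu.

Definition spectral_decomp n (U V : 'M[C]_n) (theta : 'I_n -> R) : Prop :=
  [/\ adjmx V *m V = 1%:M,
      (forall k, - pi < theta k <= pi) &
      U = V *m diag_mx (\row_k expi (theta k)) *m adjmx V].

Definition coords n (V : 'M[C]_n) (v : 'cV[C]_n) : 'cV[C]_n := adjmx V *m v.

(* Pr[QH > y]: QH takes value 1/|theta_k| (i.e. 1/alpha_j for the phases
   +-alpha_j, 1/pi for the phase pi) with the weight of v on the corresponding
   eigenvector, and 0 otherwise (total mass 1). *)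
Definition QH_tail n (V : 'M[C]_n) (theta : 'I_n -> R) (v : 'cV[C]_n) (y : R) : R :=
  if y < 0 then 1
  else \sum_(k < n | (theta k != 0) && (y < `|theta k|^-1)) sqmod (coords V v k 0).

(* QHT_eps = min { y | Pr[QH > y] <= eps } (the set is an up-closed ray with
   attained minimum, so its infimum is that minimum) *)
Definition QHT n (V : 'M[C]_n) (theta : 'I_n -> R) (v : 'cV[C]_n) (eps : R) : R :=
  inf [set y : R | QH_tail V theta v y <= eps].

Definition U_rotation n (V : 'M[C]_n) (theta : 'I_n -> R) (v : 'cV[C]_n) : 'cV[C]_n :=
  V *m diag_mx (\row_k (if theta k < 0 then -1 else 1)) *m coords V v.

(* Phase estimation, outcome-m branch: the standard circuit maps
   |w>|0> to |w> (sum_m amp(alpha, m) |m>) for every eigenvector w of U of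
   eigenphase alpha, i.e. its outcome-m branch operator is the function of U
   V diag(amp(theta_k, m)) V^*. *)
Definition est_op n (V : 'M[C]_n) (theta : 'I_n -> R) (O : finType)
  (amp : R -> O -> C) (m : O) : 'M[C]_n :=
  V *m diag_mx (\row_k amp (theta k) m) *m adjmx V.

(* state after k phase estimations on fresh registers, component on the
   outcome tuple t (the joint state lives in C^n (x) C^(O^k)) *)
Definition est_state n (V : 'M[C]_n) (theta : 'I_n -> R) (O : finType)
  (amp : R -> O -> C) k (v : 'cV[C]_n) (t : k.-tuple O) : 'cV[C]_n :=
  foldl (fun w m => est_op V theta amp m *m w) v t.

Definition majority_neg (O : finType) (est : O -> R) k (t : k.-tuple O) : bool :=
  (k < 2 * count (fun m => (est m < 0)%R) t)%N.

(* Euclidean distance between the output of Rotate on v (with all k+k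
   ancilla registers) and target (x) |0...0>.  Rotate = W^-1 S W where W is the
   (unitary) k-fold phase estimation and S the majority phase flip; by
   unitarity of W^-1, || W^-1 S W (v(x)0) - target(x)0 || = || S W(v(x)0) - W(target(x)0) ||,
   and W(x (x) 0) = sum_t est_state x t (x) |t>. *)
Definition rotate_error n (V : 'M[C]_n) (theta : 'I_n -> R) (O : finType)
  (est : O -> R) (amp : R -> O -> C) k (v target : 'cV[C]_n) : R :=
  Num.sqrt (\sum_(t : k.-tuple O)
     vnorm2 ((if majority_neg est t then -1 else 1) *: est_state V theta amp v t
             - est_state V theta amp target t)).

(* number of applications of c-U (or its inverse) by Rotate: k estimations
   and k undone estimations, each using [calls] applications *)
Definition rotate_calls (k calls : nat) : nat := (2 * k * calls)%N.

End QRotate.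

From HB Require Import structures.
From mathcomp Require Import all_boot all_order all_algebra.
From mathcomp Require Import all_classical all_reals all_analysis.
From mathcomp Require Import complex.
From mathcomp Require Import ring lra zify.
(* In the eigenbasis of U the k phase estimations act diagonally, so the
   squared error of Rotate on phit is the sum, over the eigenphases theta_j, of
   the weight |<w_j|phit>|^2 times the squared error of the majority vote on
   theta_j.  That error is at most 4; it vanishes for theta_j = 0, which is
   estimated exactly; and for 1/T <= |theta_j| <= pi/2 each estimate has the
   correct sign with probability at least 2/3, so by a Chernoff bound it is at
   most 4 (17/18)^k <= 4 (18/17) eps.  The remaining phases, 0 < |theta_j| < 1/T,
   carry total weight at most eps because T >= QHT_eps.  Hence the squared
   error is at most 9 eps. *)

Set Implicit Arguments. Unset Strict Implicit. Unset Printing Implicit Defensive.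
Import Order.TTheory GRing.Theory Num.Theory.
Local Open Scope ring_scope.

Lemma sum_tuple_prod (R : comPzSemiRingType) (O : finType) (g : O -> R) k :
  \sum_(t : k.-tuple O) \prod_(m <- t) g m = (\sum_m g m) ^+ k.
Proof.
elim: k => [|k IH].
  rewrite expr0 (big_pred1 [tuple]) ?big_nil // => t.
  by rewrite inE tuple0 eqxx.
pose cons_tuple (p : O * k.-tuple O) := [tuple of p.1 :: p.2].
pose split_tuple (t : k.+1.-tuple O) := (thead t, [tuple of behead t]).
have consK : cancel cons_tuple split_tuple.
  by case=> x t; congr (_, _); apply: val_inj.
rewrite (reindex cons_tuple) /=; last first.
  exists split_tuple => [p _|t _]; first exact: consK.
  by apply: val_inj; case: t => [[|x s]].
rewrite -(pair_big xpredT xpredT (fun x (t : k.-tuple O) =>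
  \prod_(m <- [tuple of x :: t]) g m)) /=.
rewrite exprS big_distrl; apply: eq_bigr => x _.
by rewrite -IH big_distrr; apply: eq_bigr => t _; rewrite big_cons.
Qed.

Section MajorityVote.
Variable R : realFieldType.

Lemma ler_sum_subset (I : finType) (P Q : pred I) (F : I -> R) :
  (forall i, 0 <= F i) -> (forall i, P i -> Q i) ->
  \sum_(i | P i) F i <= \sum_(i | Q i) F i.
Proof.
move=> F0 PQ; rewrite [X in _ <= X]big_mkcond [X in X <= _]big_mkcond.
apply: ler_sum => i _; case: ifP => [/PQ -> //|_]; by case: ifP.
Qed.

(* Exponential moment: weighting each bad outcome by 9/4 and every outcome by
   2/3 gives weight >= 1 to every tuple with a bad majority, and the weighted
   mass of one outcome is at most 2/3 (1 + 5/4 * 1/3) = 17/18. *)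
Lemma chernoff_majority (O : finType) (p : O -> R) (bad : pred O) k :
  (forall m, 0 <= p m) -> \sum_m p m = 1 -> \sum_(m | bad m) p m <= 1/3 ->
  \sum_(t : k.-tuple O | (k <= 2 * count bad t)%N) \prod_(m <- t) p m
    <= (17/18) ^+ k.
Proof.
move=> p0 p1 pbad.
pose f m : R := 2/3 * (if bad m then 9/4 else 1).
have prod_f (s : seq O) :
    \prod_(m <- s) f m = (2/3) ^+ size s * (9/4) ^+ count bad s.
  elim: s => [|m s IH]; first by rewrite big_nil !expr0 mulr1.
  by rewrite big_cons IH /f /=; case: (bad m); rewrite ?add0n !exprS; ring.
have weight_ge1 (t : k.-tuple O) : (k <= 2 * count bad t)%N -> 1 <= \prod_(m <- t) f m.
  move=> Ht; rewrite prod_f size_tuple (_ : 9/4 = (3/2) ^+ 2 :> R) -?exprM; last first.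
    by rewrite expr2; lra.
  apply: (@le_trans _ _ ((2/3) ^+ k * (3/2) ^+ k)).
    by rewrite -exprMn (_ : 2/3 * (3/2) = 1 :> R) ?expr1n //; lra.
  by apply: ler_wpM2l; [apply: exprn_ge0; lra | rewrite ler_eXn2l //; lra].
have pf0 m : 0 <= p m * f m by rewrite mulr_ge0 // /f; case: (bad m); lra.
apply: (@le_trans _ _ (\sum_(t : k.-tuple O) \prod_(m <- t) (p m * f m))).
  apply: (@le_trans _ _ (\sum_(t : k.-tuple O | (k <= 2 * count bad t)%N)
                          \prod_(m <- t) (p m * f m))).
    apply: ler_sum => t /weight_ge1 Ht; rewrite big_split /=.
    by rewrite -[X in X <= _]mulr1 ler_wpM2l // prodr_ge0.
  by apply: ler_sum_subset => // t; apply: prodr_ge0.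
rewrite sum_tuple_prod; apply: lerXn2r; rewrite ?nnegrE ?sumr_ge0 //; try lra.
have -> : \sum_m p m * f m = 2/3 * (\sum_m p m + 5/4 * \sum_(m | bad m) p m).
  rewrite (eq_bigr (fun m => 2/3 * (p m + 5/4 * (if bad m then p m else 0)))).
    by rewrite -mulr_sumr big_split /= -mulr_sumr -big_mkcond.
  by move=> m _; rewrite /f; case: (bad m); lra.
lra.
Qed.

End MajorityVote.

Section ComplexNorms.
Variable R : realType.
Local Notation C := (R[i]).

Lemma sqmod_ge0 (a : C) : 0 <= sqmod a.
Proof. by rewrite /sqmod addr_ge0 // sqr_ge0. Qed.

Lemma sqmodM (a b : C) : sqmod (a * b) = sqmod a * sqmod b.
Proof. by case: a => a1 a2; case: b => b1 b2; rewrite /sqmod /=; ring. Qed.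

Lemma sqmod_prod (I : Type) (s : seq I) (F : I -> C) :
  sqmod (\prod_(m <- s) F m) = \prod_(m <- s) sqmod (F m).
Proof.
by apply: (big_morph _ sqmodM); rewrite /sqmod /= expr1n expr0n addr0.
Qed.

Lemma sqmod_sign_sub (b1 b2 : bool) :
  sqmod ((if b1 then -1 else 1) - (if b2 then -1 else 1) : C)
  = if b1 == b2 then 0 else 4.
Proof. by case: b1; case: b2; rewrite /sqmod /=; lra. Qed.

Lemma conjc_mul_self (a : C) : conjc a * a = rc (sqmod a).
Proof. by case: a => a1 a2; rewrite /sqmod /rc /=; congr Complex; ring. Qed.

Lemma rcD (a b : R) : rc (a + b) = rc a + rc b.
Proof. exact: (raddfD (@real_complex R)). Qed.

Lemma rc_inj : injective (@rc R).
Proof. by move=> a b []. Qed.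

Lemma adjmxM m n p (A : 'M[C]_(m, n)) (B : 'M[C]_(n, p)) :
  adjmx (A *m B) = adjmx B *m adjmx A.
Proof. by rewrite /adjmx map_mxM trmx_mul. Qed.

Lemma adjmxK m n (A : 'M[C]_(m, n)) : adjmx (adjmx A) = A.
Proof. by apply/matrixP => i j; rewrite /adjmx !mxE conjcK. Qed.

Lemma vnorm2E n (v : 'cV[C]_n) : (adjmx v *m v) 0 0 = rc (vnorm2 v).
Proof.
rewrite mxE /vnorm2 (big_morph _ rcD (erefl : rc 0 = 0)).
by apply: eq_bigr => i _; rewrite /adjmx !mxE conjc_mul_self.
Qed.

Lemma vnorm2_unitary n (A : 'M[C]_n) (v : 'cV[C]_n) :
  adjmx A *m A = 1%:M -> vnorm2 (A *m v) = vnorm2 v.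
Proof.
move=> unitA; apply: rc_inj; rewrite -!vnorm2E adjmxM -mulmxA.
by rewrite (mulmxA (adjmx A)) unitA mul1mx.
Qed.

End ComplexNorms.

Section VoteError.
Variable R : realType.
Local Notation C := (R[i]).
Variables (O : finType) (est : O -> R) (amp : R -> O -> C) (k : nat).

(* The squared error of Rotate on a unit eigenvector of eigenphase [a]. *)
Definition vote_error (a : R) : R :=
  \sum_(t : k.-tuple O) sqmod (\prod_(m <- t) amp a m) *
     sqmod ((if majority_neg est t then -1 else 1) - (if a < 0 then -1 else 1) : C).

Hypothesis amp_norm : forall a : R, \sum_(m : O) sqmod (amp a m) = 1.

Lemma vote_error_le4 a : vote_error a <= 4.
Proof.
apply: (@le_trans _ _ (\sum_(t : k.-tuple O) \prod_(m <- t) sqmod (amp a m) * 4)).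
  apply: ler_sum => t _; rewrite sqmod_prod sqmod_sign_sub.
  apply: ler_wpM2l; last by case: eqP; lra.
  by apply: prodr_ge0 => m _; apply: sqmod_ge0.
by rewrite -mulr_suml sum_tuple_prod amp_norm expr1n mul1r.
Qed.

Lemma vote_error0 : (forall m, est m != 0 -> amp 0 m = 0) -> vote_error 0 = 0.
Proof.
move=> amp0; apply: big1 => t _.
case: (boolP (has (fun m => est m != 0) t)) => [/hasP [m tm estm]|].
  suff /eqP -> : \prod_(m <- t) amp 0 m == 0 by rewrite /sqmod /= expr0n /= addr0 mul0r.
  by rewrite prodf_seq_eq0; apply/hasP; exists m; rewrite //= amp0.
rewrite -all_predC => /allP est0.
suff -> : majority_neg est t = false by rewrite ltxx subrr /sqmod /= expr0n /= addr0 mulr0.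
apply/negbTE; rewrite /majority_neg -leqNgt.
rewrite (eq_in_count (a2 := pred0)) ?count_pred0 // => m /est0 /=.
by rewrite negbK => /eqP ->; rewrite ltxx.
Qed.

Variable delta : R.

Lemma majority_wrong_count a (t : k.-tuple O) : delta <= `|a| ->
  majority_neg est t != (a < 0) ->
  (k <= 2 * count (fun m => ~~ (`|est m - a| < delta)%R) t)%N.
Proof.
rewrite /majority_neg; case: ltrP => [a0 | a0] /=; [rewrite ltr0_norm // | rewrite ger0_norm //].
- move=> Ha; case: ltnP => // Hmaj _.
  have Hc := count_predC (fun m => (est m < 0)%R) t; rewrite size_tuple in Hc.
  have : (count (predC (fun m => (est m < 0)%R)) t <=
          count (fun m => ~~ (`|est m - a| < delta)%R) t)%N.
    apply: sub_count => m /=; rewrite -leNgt => em.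
    by rewrite ltr_norml negb_and -!leNgt; apply/orP; right; lra.
  lia.
- move=> Ha Hmaj.
  have : (count (fun m => (est m < 0)%R) t <=
          count (fun m => ~~ (`|est m - a| < delta)%R) t)%N.
    apply: sub_count => m /= em.
    by rewrite ltr_norml negb_and -!leNgt; apply/orP; left; lra.
  lia.
Qed.

Hypothesis est_close : forall a : R, `|a| <= pi / 2 ->
  2 / 3 <= \sum_(m : O | `|est m - a| < delta) sqmod (amp a m).

Lemma vote_error_far a : delta <= `|a| -> `|a| <= pi / 2 ->
  vote_error a <= 4 * (17/18) ^+ k.
Proof.
move=> Ha Hpi.
pose bad m := ~~ (`|est m - a| < delta).
pose wrong (t : k.-tuple O) := (k <= 2 * count bad t)%N.
apply: (@le_trans _ _ (\sum_(t : k.-tuple O)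
          4 * (if wrong t then \prod_(m <- t) sqmod (amp a m) else 0))).
  apply: ler_sum => t _; rewrite sqmod_prod sqmod_sign_sub.
  have P0 : 0 <= \prod_(m <- t) sqmod (amp a m) by apply: prodr_ge0 => m _; apply: sqmod_ge0.
  case: eqP => [_|/eqP ne]; first by case: ifP; lra.
  by rewrite /wrong (majority_wrong_count Ha ne); lra.
rewrite -mulr_sumr -big_mkcond; apply: ler_wpM2l; first lra.
apply: chernoff_majority => [m|//|]; first exact: sqmod_ge0.
have := est_close Hpi; have := amp_norm a.
by rewrite (bigID (fun m => `|est m - a| < delta)) /=; lra.
Qed.

End VoteError.

Section PhaseEstimation.
Variable R : realType.
Local Notation C := (R[i]).
Variables (n : nat) (V : 'M[C]_n) (theta : 'I_n -> R).
Variables (O : finType) (est : O -> R) (amp : R -> O -> C).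
Hypothesis unitV : adjmx V *m V = 1%:M.

Lemma foldl_est_op (s : seq O) (d : 'rV[C]_n) (x : 'cV[C]_n) :
  foldl (fun w m => est_op V theta amp m *m w) (V *m diag_mx d *m x) s =
  V *m diag_mx (\row_j (\prod_(m <- s) amp (theta j) m * d 0 j)) *m x.
Proof.
elim: s d => [|m s IH] d /=.
  by congr (_ *m diag_mx _ *m _); apply/rowP => j; rewrite !mxE big_nil mul1r.
rewrite /est_op -!mulmxA (mulmxA (adjmx V)) unitV mul1mx (mulmxA (diag_mx _)).
rewrite mulmx_diag !mulmxA IH; congr (_ *m diag_mx _ *m _); apply/rowP => j.
by rewrite !mxE big_cons mulrCA mulrA.
Qed.

Lemma est_stateE k (v : 'cV[C]_n) (t : k.-tuple O) :
  est_state V theta amp v t =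
  V *m diag_mx (\row_j \prod_(m <- t) amp (theta j) m) *m coords V v.
Proof.
have v_eq : v = V *m diag_mx (\row_(j < n) (1 : C)) *m coords V v.
  have -> : diag_mx (\row_(j < n) (1 : C)) = 1%:M.
    by rewrite -diag_const_mx; congr diag_mx; apply/rowP => j; rewrite !mxE.
  by rewrite mulmx1 mulmxA (mulmx1C unitV) mul1mx.
rewrite /est_state {1}v_eq foldl_est_op; congr (_ *m diag_mx _ *m _).
by apply/rowP => j; rewrite !mxE mulr1.
Qed.

Lemma rotate_errorE k (v : 'cV[C]_n) :
  rotate_error V theta est amp k v (U_rotation V theta v) =
  Num.sqrt (\sum_j sqmod (coords V v j 0) * vote_error est amp k (theta j)).
Proof.
rewrite /rotate_error /vote_error; congr Num.sqrt.
under eq_bigr => t _ do rewrite !est_stateE /U_rotation /coords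
  -!mulmxA (mulmxA (adjmx V)) unitV mul1mx scalemxAr -mulmxBr vnorm2_unitary //.
rewrite /coords; move: (adjmx V *m v) => x.
rewrite /vnorm2 exchange_big /=; apply: eq_bigr => j _.
rewrite mulr_sumr; apply: eq_bigr => t _; rewrite !mul_diag_mx !mxE.
move: (\prod_(m <- t) amp (theta j) m) (if majority_neg est t then -1 else 1 : C)
  (if theta j < 0 then -1 else 1 : C) (x j 0) => a s1 s2 y.
rewrite (_ : _ - _ = a * (s1 - s2) * y) ?sqmodM 1?mulrC //.
by rewrite mulrBr mulrBl !mulrA mulrAC.
Qed.

End PhaseEstimation.

Section Spectrum.
Variable R : realType.
Local Notation C := (R[i]).

Lemma spectral_phase_bound n (U V : 'M[C]_n) (theta : 'I_n -> R) :
  spectral_decomp U V theta ->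
  (forall alpha : R, - pi < alpha <= pi ->
     (exists2 w : 'cV[C]_n, w != 0 & U *m w = expi alpha *: w) ->
     `|alpha| <= pi / 2) ->
  forall j, `|theta j| <= pi / 2.
Proof.
case=> unitV theta_range -> phase_bound j; apply: phase_bound => //.
exists (col j V).
  apply: contra_neq (@oner_neq0 C) => colj0.
  have := congr1 (fun M : 'M[C]_n => M j j) unitV; rewrite /= !mxE eqxx mulr1n => <-.
  apply: big1 => i _.
  by have := congr1 (fun c : 'cV[C]_n => c i 0) colj0; rewrite /= !mxE => ->; rewrite mulr0.
rewrite colE -!mulmxA (mulmxA (adjmx V)) unitV mul1mx.
have -> : diag_mx (\row_k expi (theta k)) *m delta_mx j 0 =
          expi (theta j) *: (delta_mx j 0 : 'cV[C]_n).
  apply/matrixP => i l; rewrite mul_diag_mx !mxE.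
  by case: eqP => [->|_]; rewrite ?mulr0 ?mulr1 //= ?andbF ?mulr0.
by rewrite scalemxAr.
Qed.

End Spectrum.

Section QuantumHittingTime.
Variable R : realType.
Local Notation C := (R[i]).

Lemma finite_pos_lower_bound (I : finType) (P : pred I) (x : I -> R) :
  (forall i, P i -> 0 < x i) -> exists2 d, 0 < d & forall i, P i -> d <= x i.
Proof.
(* (1 + sum_i 1/x_i)^-1 avoids a minimum over a possibly empty index set. *)
move=> x0; pose S := \sum_(i | P i) (x i)^-1.
have S0 : 0 <= S by apply: sumr_ge0 => i /x0 /ltW; rewrite invr_ge0.
exists (1 + S)^-1; first by rewrite invr_gt0; lra.
move=> i Pi; rewrite -[x i]invrK lef_pV2 ?posrE ?invr_gt0 ?x0 //; last lra.
have : (x i)^-1 <= S.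
  rewrite /S (bigD1 i) //= lerDl; apply: sumr_ge0 => j /andP [/x0 /ltW + _].
  by rewrite invr_ge0.
lra.
Qed.

Lemma QH_tail_le_of_QHT_le n (V : 'M[C]_n) (theta : 'I_n -> R) (v : 'cV[C]_n)
    (eps T : R) :
  0 <= eps -> eps < 1 -> QHT V theta v eps <= T ->
  \sum_(k < n | (theta k != 0) && (T < `|theta k|^-1)) sqmod (coords V v k 0) <= eps.
Proof.
move=> eps0 eps1 QHT_T.
pose E := [set y : R | QH_tail V theta v y <= eps]%classic.
have E_ge0 y : E y -> 0 <= y by rewrite /E /= /QH_tail; case: ltP => // _; lra.
have infE : has_inf E.
  split; last by exists 0 => y /E_ge0.
  exists (\sum_k `|theta k|^-1).
  have s0 : 0 <= \sum_k `|theta k|^-1 by apply: sumr_ge0 => k _; rewrite invr_ge0.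
  rewrite /E /= /QH_tail ltNge s0 /= big1 => [|k /andP [_]]; first lra.
  by rewrite ltNge (bigD1 k) //= lerDl sumr_ge0 // => j _; rewrite invr_ge0.
pose A k := (theta k != 0) && (T < `|theta k|^-1).
have [d d0 gap] : exists2 d, 0 < d & forall k, A k -> d <= `|theta k|^-1 - T.
  by apply: finite_pos_lower_bound => k /andP [_]; rewrite subr_gt0.
(* Some y with tail y <= eps lies below QHT + d <= T + d, and no 1/|theta_k|
   lies in (T, T + d), so the tail at T is contained in the tail at y. *)
have [y Ey y_lt] := inf_adherent d0 infE.
apply: le_trans (Ey : QH_tail V theta v y <= eps).
rewrite /QH_tail ltNge E_ge0 //=.
apply: ler_sum_subset => [k|k Ak]; first exact: sqmod_ge0.
case/andP: (Ak) => -> _ /=; have := gap k Ak; rewrite /QHT in QHT_T; lra.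
Qed.

End QuantumHittingTime.

Section ErrorBound.
Variable R : realType.
Local Notation C := (R[i]).

Lemma coords_weight n (V : 'M[C]_n) (v : 'cV[C]_n) :
  adjmx V *m V = 1%:M -> \sum_j sqmod (coords V v j 0) = vnorm2 v.
Proof. by move=> unitV; rewrite -/(vnorm2 _) vnorm2_unitary // adjmxK mulmx1C. Qed.

Lemma vnorm2_phi_tilde n (phi0 mu : 'cV[R]_n) :
  \sum_(i < n) phi0 i 0 ^+ 2 = 1 -> \sum_(i < n) mu i 0 ^+ 2 = 1 ->
  vnorm2 (cmx (phi_tilde phi0 mu)) = 1 - ((mu^T *m phi0) 0 0) ^+ 2.
Proof.
move=> phi0_unit mu_unit.
have -> : (mu^T *m phi0) 0 0 = \sum_i mu i 0 * phi0 i 0.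
  by rewrite mxE; apply: eq_bigr => i _; rewrite mxE.
set a := \sum_i mu i 0 * phi0 i 0.
have -> : vnorm2 (cmx (phi_tilde phi0 mu)) =
   \sum_i (phi0 i 0 ^+ 2 - 2 * a * (mu i 0 * phi0 i 0) + a ^+ 2 * mu i 0 ^+ 2).
  apply: eq_bigr => i _; rewrite /cmx /phi_tilde !mxE /sqmod /rc /=.
  rewrite (_ : \sum_j mu^T 0 j * phi0 j 0 = a); last by apply: eq_bigr => j _; rewrite mxE.
  by clearbody a; ring.
by rewrite !big_split /= -!mulr_sumr sumrN -mulr_sumr phi0_unit mu_unit -/a; ring.
Qed.

Lemma sqrtr9 : Num.sqrt 9 = 3 :> R.
Proof. by rewrite (_ : 9 = 3 ^+ 2) ?sqrtr_sqr ?ger0_norm //; rewrite expr2; lra. Qed.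

Lemma expr_truncn_ln_le (q eps : R) : 0 < q < 1 -> 0 < eps ->
  q ^+ Num.truncn ((ln q^-1)^-1 * ln eps^-1) <= eps / q.
Proof.
move=> /andP [q0 q1] eps0.
have lnq : 0 < ln q^-1 by apply: ln_gt0; rewrite invf_gt1.
set k := Num.truncn _.
have : ln eps^-1 < ln ((q ^+ k.+1)^-1).
  rewrite -exprVn lnXn ?invr_gt0 // -mulr_natr mulrC -ltr_pdivrMr //.
  by rewrite mulrC truncnS_gt.
rewrite ltr_ln ?posrE ?invr_gt0 ?exprn_gt0 // ltf_pV2 ?posrE ?exprn_gt0 //.
by rewrite exprSr ler_pdivlMr // => /ltW.
Qed.

Lemma weighted_vote_error_le (I : finType) (w : I -> R) (theta : I -> R)
    (O : finType) (est : O -> R) (amp : R -> O -> C) (k : nat) (eps T : R) :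
  0 < T -> (forall j, 0 <= w j) -> \sum_j w j <= 1 ->
  \sum_(j | (theta j != 0) && (T < `|theta j|^-1)) w j <= eps ->
  (forall j, `|theta j| <= pi / 2) ->
  (forall a : R, \sum_(m : O) sqmod (amp a m) = 1) ->
  (forall a : R, `|a| <= pi / 2 ->
     2 / 3 <= \sum_(m : O | `|est m - a| < T^-1) sqmod (amp a m)) ->
  (forall m : O, est m != 0 -> amp 0 m = 0) ->
  \sum_j w j * vote_error est amp k (theta j) <= 4 * eps + 4 * (17/18) ^+ k.
Proof.
move=> T0 w0 w1 tail phase amp_norm est_close amp0.
pose near j := (theta j != 0) && (T < `|theta j|^-1).
rewrite (bigID near) /=; apply: lerD.
  apply: (@le_trans _ _ (\sum_(j | near j) w j * 4)).
    by apply: ler_sum => j _; rewrite ler_wpM2l ?vote_error_le4.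
  by rewrite -mulr_suml mulrC ler_wpM2l.
apply: (@le_trans _ _ (\sum_(j | ~~ near j) w j * (4 * (17/18) ^+ k))).
  apply: ler_sum => j far_j; apply: ler_wpM2l => //.
  have [->|theta0] := eqVneq (theta j) 0.
    by rewrite vote_error0 //; apply: mulr_ge0 => //; apply: exprn_ge0; lra.
  apply: (vote_error_far k amp_norm est_close) => //.
  move: far_j; rewrite /near theta0 /= -leNgt => far_j.
  by rewrite -[`|_|]invrK lef_pV2 ?posrE ?invr_gt0 ?normr_gt0.
rewrite -mulr_suml -[X in _ <= X]mul1r ler_wpM2r //.
by apply: le_trans w1; apply: ler_sum_subset.
Qed.

End ErrorBound.

Theorem theorem7 (R : realType) (cE : R) :
  0 <= cE ->
  exists kappa : R, 0 < kappa /\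
  exists Cst : R,
  forall (n : nat) (U2 : 'M[R]_n) (phi0 mu : 'cV[R]_n) (eps T : R)
         (V : 'M[R[i]]_n) (theta : 'I_n -> R)
         (O : finType) (est : O -> R) (amp : R -> O -> R[i]) (calls : nat),
  U2^T *m U2 = 1%:M ->
  U2 *m phi0 = phi0 ->
  \sum_(i < n) phi0 i 0 ^+ 2 = 1 ->
  (forall v : 'cV[R[i]]_n, cmx U2 *m v = v -> exists a : R[i], v = a *: cmx phi0) ->
  \sum_(i < n) mu i 0 ^+ 2 = 1 ->
  0 < eps < 1 ->
  let U := cmx (U2 *m householder mu) in
  let phit := cmx (phi_tilde phi0 mu) in
  (forall alpha : R, - pi < alpha <= pi ->
     (exists2 w : 'cV[R[i]]_n, w != 0 & U *m w = expi alpha *: w) ->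
     `|alpha| <= pi / 2) ->
  spectral_decomp U V theta ->
  0 < T ->
  QHT V theta phit eps <= T ->
  (forall alpha : R, \sum_(m : O) sqmod (amp alpha m) = 1) ->
  (forall alpha : R, `|alpha| <= pi / 2 ->
     2 / 3 <= \sum_(m : O | `|est m - alpha| < T^-1) sqmod (amp alpha m)) ->
  (forall m : O, est m != 0 -> amp 0 m = 0) ->
  calls%:R <= cE * T ->
  let k := Num.truncn (kappa * ln eps^-1) in
  rotate_error V theta est amp k phit (U_rotation V theta phit) <= Cst * Num.sqrt eps /\
  (rotate_calls k calls)%:R <= Cst * ln eps^-1 * T.
Proof.
move=> cE0; pose q : R := 17/18; pose kappa := (ln q^-1)^-1.
have kappa0 : 0 < kappa by rewrite invr_gt0 ln_gt0 // /q; lra.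
exists kappa; split => //; exists (3 + 2 * kappa * cE).
move=> n U2 phi0 mu eps T V theta O est amp calls _ _ phi0_unit _ mu_unit
  /andP [eps0 eps1] U phit phase_bound spec T0 QHT_T amp_norm est_close amp0 calls_T k.
have unitV : adjmx V *m V = 1%:M by case: spec.
have lneps : 0 < ln eps^-1 by rewrite ln_gt0 // invf_gt1.
have k_le : k%:R <= kappa * ln eps^-1 by rewrite truncn_le mulr_ge0 ?ltW.
split.
  have qk : q ^+ k <= eps / q by apply: expr_truncn_ln_le => //; rewrite /q; lra.
  have vote_bound : 4 * eps + 4 * q ^+ k <= 9 * eps.
    by move: qk; clearbody k; move: (q ^+ k) => qk; rewrite /q; clear -eps0; lra.
  have err2 : \sum_j sqmod (coords V phit j 0) * vote_error est amp k (theta j) <= 9 * eps.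
    have weight1 : \sum_j sqmod (coords V phit j 0) <= 1.
      by rewrite coords_weight // vnorm2_phi_tilde // lerBlDr lerDl sqr_ge0.
    have tail := QH_tail_le_of_QHT_le (ltW eps0) eps1 QHT_T.
    have phases := spectral_phase_bound spec phase_bound.
    apply: le_trans vote_bound.
    exact: weighted_vote_error_le T0 (fun j => sqmod_ge0 _) weight1 tail phases
      amp_norm est_close amp0.
  rewrite rotate_errorE // (le_trans (ler_wsqrtr err2)) // sqrtrM ?ler0n //.
  rewrite sqrtr9 ler_wpM2r ?sqrtr_ge0 // lerDl.
  by rewrite !mulr_ge0 // ltW.
rewrite /rotate_calls !natrM.
have -> : (3 + 2 * kappa * cE) * ln eps^-1 * T =
          3 * (ln eps^-1 * T) + 2 * (kappa * ln eps^-1) * (cE * T) by ring.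
apply: le_trans (ler_pM _ _ (ler_pM _ _ _ k_le) calls_T) _; rewrite ?mulr_ge0 //.
by rewrite -[X in X <= _]add0r lerD2r !mulr_ge0 // ltW.
Qed.
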